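(* Let $A_\Gamma$ be a right-angled Artin group. Then the centre $Z(\mathrm{Aut}(A_\Gamma))$ has order at most two. In particular, if $A_\Gamma$ is not free abelian, then $\mathrm{Aut}(A_\Gamma)$ has trivial centre.
   Context: For a finite simplicial graph $\Gamma=(V,E)$, the right-angled Artin group $A_\Gamma$ is the group with presentation $\langle v\in V\mid [v,w]=1 \text{ whenever }(v,w)\in E\rangle$. *)

(* Right-angled Artin groups presented as words modulo the
   congruence generated by free reduction and the RAAG commutation relations
   (a setoid presentation of the group <V | [v,w]=1 for (v,w) in E>). *)
From Stdlib Require Import Relations.
From mathcomp Require Import all_boot all_order all_algebra.
Set Implicit Arguments. Unset Strict Implicit. Unset Printing Implicit Defensive.
Import GRing.Theory.

Section RAAG.
Variables (T : finType) (e : rel T).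

(* a letter is a generator v (false) or its inverse v^-1 (true) *)
Definition letter := (T * bool)%type.
Definition word := seq letter.

Definition linv (x : letter) : letter := (x.1, ~~ x.2).

Inductive raag_step : word -> word -> Prop :=
| step_free (u w : word) (x : letter) :
    raag_step (u ++ [:: x; linv x] ++ w) (u ++ w)
| step_comm (u w : word) (a b : T) (s t : bool) :
    e a b -> raag_step (u ++ [:: (a, s); (b, t)] ++ w)
                       (u ++ [:: (b, t); (a, s)] ++ w).

Definition raag_eq : word -> word -> Prop := clos_refl_sym_trans word raag_step.

Definition wmul (u v : word) : word := u ++ v.
Definition wone : word := [::].

Definition raag_endo (f : word -> word) : Prop :=
  (forall u v, raag_eq u v -> raag_eq (f u) (f v)) /\
  (forall u v, raag_eq (f (wmul u v)) (wmul (f u) (f v))).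

Definition raag_aut (f : word -> word) : Prop :=
  raag_endo f /\ exists g, raag_endo g /\
    (forall w, raag_eq (g (f w)) w) /\ (forall w, raag_eq (f (g w)) w).

Definition aut_eq (f g : word -> word) : Prop := forall w, raag_eq (f w) (g w).

Definition aut_central (f : word -> word) : Prop :=
  raag_aut f /\ forall g, raag_aut g -> aut_eq (fun w => f (g w)) (fun w => g (f w)).

Definition raag_free_abelian : Prop :=
  exists (n : nat) (phi : word -> {ffun 'I_n -> int}),
    (forall u v, raag_eq u v -> phi u = phi v) /\
    (forall u v, phi (wmul u v) = (phi u + phi v)%R) /\
    (forall u v, phi u = phi v -> raag_eq u v) /\
    (forall z, exists w, phi w = z).
End RAAG.

Definition simplicial_graph (T : finType) (e : rel T) : Prop :=
  symmetric e /\ irreflexive e.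

From Stdlib Require Import Relation_Operators.
From mathcomp Require Import all_boot all_order all_algebra.
From mathcomp Require Import zify ring.
Set Implicit Arguments. Unset Strict Implicit. Unset Printing Implicit Defensive.
Import GRing.Theory Num.Theory.

(* Let f be central in Aut(A_Gamma).  Since f commutes with conjugation by v,
   the element v^-1 f(v) is central in A_Gamma, so (by a normal form for words
   up to commutation) it is a word in the central vertices, those adjacent to
   all others.  Commuting with the inversion of a vertex t <> v kills the
   exponent of t in that word, hence f(v) = v^m with m = 1 unless v is central,
   and m = +-1 since f is invertible.  Commuting with the transvection
   a |-> a b, for b central, forces the exponents of a and b to agree.  So f is
   the identity, except when every vertex is central (A_Gamma = Z^n), where f
   may also invert every generator. *)

Section RAAG.
Variables (T : finType) (e : rel T).
Hypothesis esym : symmetric e.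
Hypothesis eirr : irreflexive e.

Local Notation word := (word T).
Local Notation letter := (letter T).
Local Notation req := (raag_eq e).

Lemma req_refl u : req u u. Proof. exact: rst_refl. Qed.
Lemma req_sym u v : req u v -> req v u. Proof. exact: rst_sym. Qed.
Lemma req_trans u v w : req u v -> req v w -> req u w. Proof. exact: rst_trans. Qed.
Lemma req_step u v : raag_step e u v -> req u v. Proof. exact: rst_step. Qed.

Lemma raag_step_ctx p s u v :
  raag_step e u v -> raag_step e (p ++ u ++ s) (p ++ v ++ s).
Proof.
case=> [u0 w0 x|u0 w0 a b s0 t0 hab].
  by have h := step_free e (p ++ u0) (w0 ++ s) x; rewrite -!catA /= in h *.
by have h := step_comm (p ++ u0) (w0 ++ s) s0 t0 hab; rewrite -!catA /= in h *.
Qed.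

Lemma req_ctx p s u v : req u v -> req (p ++ u ++ s) (p ++ v ++ s).
Proof.
elim=> [a b h|a|a b _ ih|a b c _ ih1 _ ih2].
- by apply: req_step; apply: raag_step_ctx.
- exact: req_refl.
- exact: req_sym.
- exact: req_trans ih1 ih2.
Qed.

Lemma req_catl p u v : req u v -> req (p ++ u) (p ++ v).
Proof. by move=> h; have := req_ctx p [::] h; rewrite !cats0. Qed.
Lemma req_catr s u v : req u v -> req (u ++ s) (v ++ s).
Proof. by move=> h; have := req_ctx [::] s h. Qed.
Lemma req_cat u u' v v' : req u u' -> req v v' -> req (u ++ v) (u' ++ v').
Proof. by move=> h1 h2; apply: req_trans (req_catr _ h1) (req_catl _ h2). Qed.
Lemma req_cons x u v : req u v -> req (x :: u) (x :: v).
Proof. exact: (req_catl [:: x]). Qed.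

Lemma linvK : involutive (@linv T).
Proof. by case=> a b; rewrite /linv /= negbK. Qed.

Lemma req_lettV x : req [:: x; linv x] [::].
Proof. by apply: req_step; have := step_free e [::] [::] x. Qed.
Lemma req_Vlett x : req [:: linv x; x] [::].
Proof. by have := req_lettV (linv x); rewrite linvK. Qed.

Definition winv (w : word) : word := rev (map (@linv T) w).

Lemma winv_cons x u : winv (x :: u) = rcons (winv u) (linv x).
Proof. by rewrite /winv /= rev_cons. Qed.
Lemma winvK : involutive winv.
Proof. by move=> u; rewrite /winv map_rev revK -map_comp (eq_map linvK) map_id. Qed.

Lemma req_catV u : req (u ++ winv u) [::].
Proof.
elim: u => [|x u ih] /=; first exact: req_refl.
rewrite winv_cons -cats1 catA.
apply: req_trans (_ : req ((x :: u ++ winv u) ++ [:: linv x]) ([:: x] ++ [:: linv x])) _.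
  by apply: req_catr; apply: (req_catl [:: x]) ih.
exact: req_lettV.
Qed.
Lemma req_Vcat u : req (winv u ++ u) [::].
Proof. by have := req_catV (winv u); rewrite winvK. Qed.

Lemma req_catlI p u v : req (p ++ u) (p ++ v) -> req u v.
Proof.
move=> h.
have h1 : req u (winv p ++ p ++ u).
  by rewrite catA; apply: req_sym; apply: (req_catr u (req_Vcat p)).
have h2 : req (winv p ++ p ++ v) v by rewrite catA; apply: (req_catr v (req_Vcat p)).
exact: req_trans h1 (req_trans (req_catl _ h) h2).
Qed.
Lemma req_catrI s u v : req (u ++ s) (v ++ s) -> req u v.
Proof.
move=> h.
have h1 : req u ((u ++ s) ++ winv s).
  by rewrite -catA; apply: req_sym; have := req_catl u (req_catV s); rewrite cats0.
have h2 : req ((v ++ s) ++ winv s) v.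
  by rewrite -catA; have := req_catl v (req_catV s); rewrite cats0.
exact: req_trans h1 (req_trans (req_catr _ h) h2).
Qed.

Lemma req_winv u v : req u v -> req (winv u) (winv v).
Proof.
move=> h; apply: (@req_catlI u); apply: req_trans (req_catV u) _.
by apply: req_sym; apply: req_trans (req_catr _ h) (req_catV v).
Qed.

Definition lcomm (x y : letter) := e x.1 y.1 || (x.1 == y.1).

Lemma req_swap x y : lcomm x y -> req [:: x; y] [:: y; x].
Proof.
case/orP=> h.
  case: x y h => a s [b t] /= h; apply: req_step.
  by have := step_comm [::] [::] s t h.
case: x y h => a s [b t] /= /eqP <-.
case: (eqVneq s t) => [->|hst]; first exact: req_refl.
have -> : t = ~~ s by case: s t hst => [] [].
apply: req_trans (req_lettV (a, s)) _.
by apply: req_sym; have := req_Vlett (a, s).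
Qed.

Lemma req_comm_letter x q : {in q, forall y, lcomm x y} -> req (x :: q) (q ++ [:: x]).
Proof.
elim: q => [|y q ih] h /=; first exact: req_refl.
apply: req_trans (_ : req ([:: x; y] ++ q) ([:: y; x] ++ q)) _.
  by apply: req_catr; apply: req_swap; apply: h; rewrite inE eqxx.
by apply: (req_catl [:: y]); apply: ih => z hz; apply: h; rewrite inE hz orbT.
Qed.

Lemma req_comm p q : {in p & q, forall x y, lcomm x y} -> req (p ++ q) (q ++ p).
Proof.
elim: p => [|x p ih] h /=; first by rewrite cats0; exact: req_refl.
have h1 : req (x :: (p ++ q)) (x :: (q ++ p)).
  by apply: req_cons; apply: ih => a b ha hb; apply: h; rewrite ?inE ?ha ?orbT.
have h2 : req ((x :: q) ++ p) ((q ++ [:: x]) ++ p).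
  by apply: req_catr; apply: req_comm_letter => y hy; apply: h; rewrite ?inE ?eqxx.
by rewrite -catA /= in h2; exact: req_trans h1 h2.
Qed.

Definition ladj (x y : letter) := e x.1 y.1.

(* Normal forms are stacks: the head of a stack is the LAST letter of the word
   it represents.  [cancel_in x st] looks for [linv x] in [st] below letters
   adjacent to [x] and removes it. *)
Fixpoint cancel_in (x : letter) (st : word) : option word :=
  if st is y :: st' then
    if y == linv x then Some st'
    else if e x.1 y.1 then omap (cons y) (cancel_in x st') else None
  else None.

Definition push (st : word) (x : letter) : word :=
  if cancel_in x st is Some st' then st' else x :: st.

Definition reduce (w : word) : word := foldl push [::] w.

Fixpoint reduced (st : word) : Prop :=
  if st is y :: st' then reduced st' /\ cancel_in y st' = None else True.

Inductive swap_step : word -> word -> Prop :=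
  SwapStep p q (a b : letter) :
    e a.1 b.1 -> swap_step (p ++ a :: b :: q) (p ++ b :: a :: q).

Definition swap_eq := clos_refl_sym_trans word swap_step.

Lemma swap_eq_refl u : swap_eq u u. Proof. exact: rst_refl. Qed.
Lemma swap_eq_sym u v : swap_eq u v -> swap_eq v u. Proof. exact: rst_sym. Qed.
Lemma swap_eq_trans u v w : swap_eq u v -> swap_eq v w -> swap_eq u w.
Proof. exact: rst_trans. Qed.
Lemma swap_eq_step u v : swap_step u v -> swap_eq u v. Proof. exact: rst_step. Qed.

Lemma swap_eq_cons z u v : swap_eq u v -> swap_eq (z :: u) (z :: v).
Proof.
elim=> [a b h|a|a b _ ih|a b c _ ih1 _ ih2].
- by apply: swap_eq_step; case: h => p q x y hxy; apply: (SwapStep (z :: p)).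
- exact: swap_eq_refl.
- exact: swap_eq_sym.
- exact: swap_eq_trans ih1 ih2.
Qed.

Lemma swap_eq_move y m q : all (ladj y) m -> swap_eq (y :: m ++ q) (m ++ y :: q).
Proof.
elim: m => [|z m ih] /=; first by move=> _; exact: swap_eq_refl.
case/andP=> hz hm; apply: swap_eq_trans (_ : swap_eq (z :: y :: m ++ q) _).
  by apply: swap_eq_step; apply: (SwapStep [::]).
by apply: swap_eq_cons; apply: ih.
Qed.

Lemma swap_eq_size u v : swap_eq u v -> size u = size v.
Proof.
elim=> [a b h|a|a b _ ih|a b c _ ih1 _ ih2] //; last by rewrite ih1.
by case: h => p q x y _; rewrite !size_cat.
Qed.

Lemma swap_eq_filter (P : pred letter) u v :
  (forall a b : letter, e a.1 b.1 -> ~~ (P a && P b)) ->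
  swap_eq u v -> filter P u = filter P v.
Proof.
move=> hP; elim=> [a b h|a|a b _ ih|a b c _ ih1 _ ih2] //; last by rewrite ih1.
case: h => p q x y hxy; rewrite !filter_cat /=.
by have := hP _ _ hxy; case: (P x); case: (P y).
Qed.

Lemma ladj_neq_linv x y : ladj x y -> (y == linv x) = false.
Proof. by move=> h; apply/eqP => hy; move: h; rewrite /ladj hy /= eirr. Qed.

Lemma cancel_in_catl x m q :
  all (ladj x) m -> cancel_in x (m ++ q) = omap (cat m) (cancel_in x q).
Proof.
elim: m => [|y m ih] /=; first by case: (cancel_in x q).
case/andP=> hy hm; rewrite ladj_neq_linv //; move: hy; rewrite /ladj => -> /=; rewrite ih //.
by case: (cancel_in x q).
Qed.

Lemma cancel_in_cons_adj x y st :
  ladj x y -> cancel_in x (y :: st) = omap (cons y) (cancel_in x st).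
Proof. by move=> h /=; rewrite ladj_neq_linv // (h : e x.1 y.1). Qed.

Lemma cancel_inP x st r : cancel_in x st = Some r ->
  exists m q, [/\ st = m ++ linv x :: q, all (ladj x) m & r = m ++ q].
Proof.
elim: st r => [|y st ih] r //=.
case: eqP => [-> [<-]|_]; first by exists [::], st.
case: ifP => // hy; case hc: (cancel_in x st) => [r'|] //= [<-].
have [m [q [-> hm ->]]] := ih _ hc.
by exists (y :: m), q; split => //=; rewrite hm andbT.
Qed.

Lemma cancel_in_swap x st st' : swap_step st st' ->
  (cancel_in x st = None /\ cancel_in x st' = None) \/
  exists r r', [/\ cancel_in x st = Some r, cancel_in x st' = Some r' & swap_eq r r'].
Proof.
case=> p q a b hab; elim: p => [|z p ih] /=.
- case: (eqVneq a (linv x)) => [ha|ha].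
    have hb : (b == linv x) = false by apply/eqP => hb; move: hab; rewrite ha hb /= eirr.
    have hxb : e x.1 b.1 by move: hab; rewrite ha.
    right; exists (b :: q), (b :: q); rewrite ha /= hb hxb.
    by split => //; exact: swap_eq_refl.
  case: (eqVneq b (linv x)) => [hb|hb].
    have hxa : e x.1 a.1 by move: hab; rewrite hb /= esym.
    by right; exists (a :: q), (a :: q); rewrite hxa; split => //; exact: swap_eq_refl.
  rewrite ?(negbTE ha) ?(negbTE hb).
  case hxa: (e x.1 a.1); case hxb: (e x.1 b.1) => /=; try by left.
  case: (cancel_in x q) => [r|] /=; last by left.
  right; exists (a :: b :: r), (b :: a :: r); split => //.
  by apply: swap_eq_step; apply: (SwapStep [::]).
- case: eqP => [_|_].
    right; exists (p ++ a :: b :: q), (p ++ b :: a :: q); split => //.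
    by apply: swap_eq_step; apply: SwapStep.
  case: ifP => _; last by left.
  case: ih => [[-> ->]|[r [r' [-> -> h]]]] /=; first by left.
  by right; exists (z :: r), (z :: r'); split => //; apply: swap_eq_cons.
Qed.

Lemma push_swap_eq x st st' : swap_eq st st' -> swap_eq (push st x) (push st' x).
Proof.
elim=> [a b h|a|a b _ ih|a b c _ ih1 _ ih2].
- rewrite /push; case: (cancel_in_swap x h) => [[-> ->]|[r [r' [-> -> //]]]].
  by apply: swap_eq_step; case: h => p q a0 b0 hab; apply: (SwapStep (x :: p)).
- exact: swap_eq_refl.
- exact: swap_eq_sym.
- exact: swap_eq_trans ih1 ih2.
Qed.

Lemma foldl_push_swap_eq w st st' :
  swap_eq st st' -> swap_eq (foldl push st w) (foldl push st' w).
Proof. by elim: w st st' => [|x w ih] st st' h //=; apply: ih; apply: push_swap_eq. Qed.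

Lemma cancel_in_comm x y st s1 s2 : e x.1 y.1 ->
  cancel_in y st = Some s1 -> cancel_in x st = Some s2 ->
  exists s, cancel_in x s1 = Some s /\ cancel_in y s2 = Some s.
Proof.
move=> hxy; have hyx : e y.1 x.1 by rewrite esym.
elim: st s1 s2 => [|z st ih] s1 s2 //=.
case: (eqVneq z (linv y)) => [hz|hz].
  move=> [<-]; rewrite hz /= ladj_neq_linv //= hxy.
  case hc: (cancel_in x st) => [s|] //= [<-].
  by exists s; split => //=; rewrite ?eqxx.
case: (eqVneq z (linv x)) => [hz'|hz'].
  rewrite hz' /= hyx; case hc: (cancel_in y st) => [s|] //= [<-] [<-].
  by exists s; split => //=; rewrite ?eqxx.
case hyz: (e y.1 z.1) => //; case hc1: (cancel_in y st) => [t1|] //= [<-].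
case hxz: (e x.1 z.1) => //; case hc2: (cancel_in x st) => [t2|] //= [<-].
have [s [h1 h2]] := ih _ _ hc1 hc2.
by exists (z :: s); rewrite /= (negbTE hz') (negbTE hz) hxz hyz h1 h2.
Qed.

Lemma cancel_in_comm_None x y st s1 : e x.1 y.1 ->
  cancel_in y st = Some s1 -> cancel_in x st = None -> cancel_in x s1 = None.
Proof.
move=> hxy; elim: st s1 => [|z st ih] s1 //=.
case: (eqVneq z (linv y)) => [hz|hz].
  by move=> [<-]; rewrite hz /= ladj_neq_linv //= hxy; case: (cancel_in x st).
case: ifP => // hyz; case hc1: (cancel_in y st) => [t1|] //= [<-].
case: (eqVneq z (linv x)) => [//|hz'].
case: ifP => hxz /=; last by rewrite (negbTE hz') hxz.
case hc2: (cancel_in x st) => [t2|] //= _.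
by rewrite (negbTE hz') hxz (ih _ hc1 hc2).
Qed.

Lemma push_comm x y st : e x.1 y.1 -> swap_eq (push (push st y) x) (push (push st x) y).
Proof.
move=> hxy; have hyx : e y.1 x.1 by rewrite esym.
rewrite /push; case hy: (cancel_in y st) => [s1|]; case hx: (cancel_in x st) => [s2|].
- have [s [-> ->]] := cancel_in_comm hxy hy hx; exact: swap_eq_refl.
- by rewrite (cancel_in_comm_None hxy hy hx) cancel_in_cons_adj // hy; exact: swap_eq_refl.
- by rewrite (cancel_in_comm_None hyx hx hy) cancel_in_cons_adj // hx; exact: swap_eq_refl.
- rewrite !cancel_in_cons_adj // hx hy /=.
  by apply: swap_eq_step; apply: (SwapStep [::]).
Qed.

Lemma cancel_in_insert z x m q r : e z.1 x.1 -> cancel_in z (m ++ q) = Some r ->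
  exists r', cancel_in z (m ++ linv x :: q) = Some r'.
Proof.
move=> hzx; elim: m r => [|y m ih] r /=.
  by move=> hc; case: eqP => [_|_]; [|rewrite hzx hc]; eexists.
case: eqP => [_ _|_]; first by eexists.
case: ifP => // _; case hc: (cancel_in z (m ++ q)) => [t|] //= _.
by have [r' ->] := ih _ hc; eexists.
Qed.

Lemma reduced_remove x m q : all (ladj x) m -> reduced (m ++ linv x :: q) -> reduced (m ++ q).
Proof.
elim: m => [|z m ih] /=; first by move=> _ [].
case/andP=> hz hm [hr hc]; split; first exact: ih.
case hc': (cancel_in z (m ++ q)) => [t|] //.
have hzx : e z.1 x.1 by rewrite esym.
by have [r' hr'] := cancel_in_insert hzx hc'; rewrite hr' in hc.
Qed.

Lemma reduced_push st x : reduced st -> reduced (push st x).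
Proof.
rewrite /push; case hc: (cancel_in x st) => [r|] hr //=.
have [m [q [hst hm ->]]] := cancel_inP hc.
by rewrite hst in hr; apply: reduced_remove hm hr.
Qed.

Lemma reduced_catr m s : reduced (m ++ s) -> reduced s.
Proof. by elim: m => [|y m ih] //= [h _]; apply: ih. Qed.

Lemma push_linv st x : reduced st -> swap_eq (push (push st x) (linv x)) st.
Proof.
move=> hr; rewrite /push.
case hc: (cancel_in x st) => [r|] /=; last by rewrite linvK eqxx; exact: swap_eq_refl.
have [m [q [hst hm ->]]] := cancel_inP hc.
rewrite cancel_in_catl //; rewrite hst in hr.
by have := reduced_catr hr => /= [[_ ->]] /=; rewrite hst; exact: swap_eq_move.
Qed.

Lemma reduce_rcons w x : reduce (rcons w x) = push (reduce w) x.
Proof. by rewrite /reduce foldl_rcons. Qed.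

Lemma reduced_reduce w : reduced (reduce w).
Proof. by elim/last_ind: w => [|w x ih] //; rewrite reduce_rcons; exact: reduced_push. Qed.

Lemma reduce_req u v : req u v -> swap_eq (reduce u) (reduce v).
Proof.
elim=> [a b h|a|a b _ ih|a b c _ ih1 _ ih2].
- case: h => [u0 w0 x|u0 w0 a0 b0 s0 t0 hab]; rewrite /reduce !foldl_cat /=.
    by apply: foldl_push_swap_eq; apply: push_linv; apply: reduced_reduce.
  by apply: foldl_push_swap_eq; apply: push_comm => /=; rewrite esym.
- exact: swap_eq_refl.
- exact: swap_eq_sym.
- exact: swap_eq_trans ih1 ih2.
Qed.

Lemma rev_push st x : req (rev (push st x)) (rcons (rev st) x).
Proof.
rewrite /push; case hc: (cancel_in x st) => [r|]; last by rewrite rev_cons; exact: req_refl.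
have [m [q [-> hm ->]]] := cancel_inP hc.
rewrite !rev_cat rev_cons -!cats1 -!catA; apply: req_catl.
have h1 : req (rev m ++ [:: x]) (x :: rev m).
  apply: req_sym; apply: req_comm_letter => z.
  by rewrite mem_rev /lcomm => /(allP hm); rewrite /ladj => ->.
apply: req_sym; apply: req_trans (req_catl [:: linv x] h1) _.
exact: (req_catr (rev m) (req_Vlett x)).
Qed.

Lemma rev_reduce w : req (rev (reduce w)) w.
Proof.
elim/last_ind: w => [|w x ih]; first exact: req_refl.
by rewrite reduce_rcons; apply: req_trans (rev_push _ _) _; rewrite -!cats1; exact: req_catr.
Qed.

Lemma reduce_rev_reduced r : reduced r -> reduce (rev r) = r.
Proof. by elim: r => [|y r ih] //= [hr hc]; rewrite rev_cons reduce_rcons ih // /push hc. Qed.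

Lemma cancel_in_rcons y s x r :
  cancel_in y (rcons s x) = Some r -> cancel_in y s = None -> x = linv y /\ all (ladj y) s.
Proof.
elim: s r => [|z s ih] r /=; first by case: eqP => [-> _ _|_] //; case: ifP.
case: eqP => // _; case: ifP => // hz.
case hc: (cancel_in y (rcons s x)) => [t|] //= _.
case hc': (cancel_in y s) => [t'|] //= _.
by have [-> ha] := ih _ hc hc'; split => //; rewrite /= ha andbT.
Qed.

Lemma reduced_rcons r x : reduced r ->
  reduced (rcons r x) \/ exists p m, r = p ++ linv x :: m /\ all (ladj x) m.
Proof.
elim: r => [|y r ih] /=; first by left.
case=> hr hc; case: (ih hr) => [hr'|[p [m [-> hm]]]]; last by right; exists (y :: p), m.
case hc': (cancel_in y (rcons r x)) => [t|]; last by left.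
have [hx hall] := cancel_in_rcons hc' hc.
by right; exists [::], r; rewrite hx linvK.
Qed.

Lemma cancel_in_insert_adj z x p m r : all (ladj x) m ->
  cancel_in z (p ++ m) = Some r -> exists r', cancel_in z (p ++ linv x :: m) = Some r'.
Proof.
move=> hm; elim: p r => [|y p ih] r /=.
  move=> hc; have [k [s [hmk _ _]]] := cancel_inP hc.
  have hin : linv z \in m by rewrite hmk mem_cat inE eqxx orbT.
  have hxz : e z.1 x.1 by rewrite esym; exact: (allP hm _ hin).
  exact: (cancel_in_insert (m := [::]) hxz hc).
case: eqP => [_ _|_]; first by eexists.
case: ifP => // _; case hc: (cancel_in z (p ++ m)) => [t|] //= _.
by have [r' ->] := ih _ hc; eexists.
Qed.

Lemma reduced_remove_adj p x m :
  all (ladj x) m -> reduced (p ++ linv x :: m) -> reduced (p ++ m).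
Proof.
move=> hm; elim: p => [|z p ih] /=; first by case.
case=> hr hc; split; first exact: ih.
case hc': (cancel_in z (p ++ m)) => [t|] //.
by have [r' hr'] := cancel_in_insert_adj hm hc'; rewrite hr' in hc.
Qed.

Lemma cons_rcons_const (A : eqType) (c : A) l : c :: l = rcons l c -> {in l, forall y, y = c}.
Proof.
elim: l => [|a l ih] //= [ha hl] y; rewrite inE => /orP[/eqP ->|hy]; first by rewrite ha.
by move: hl; rewrite -ha => hl; exact: ih hl y hy.
Qed.

(* Swaps never exchange two letters of an independent set P, so [filter P] is
   a swap invariant; comparing it on both sides of a commutation with x shows
   that all P-letters of the stack coincide. *)
Section IndependentProjection.
Variables (P : pred letter) (x : letter).
Hypothesis hP : forall a b : letter, e a.1 b.1 -> ~~ (P a && P b).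
Hypotheses (Px : P x) (Plinvx : P (linv x)).

Lemma filter_adj_nil m : all (ladj x) m -> filter P m = [::].
Proof.
elim: m => [|y m ih] //= /andP[hy hm]; rewrite ih //.
by have := hP hy; rewrite Px /= => /negbTE ->.
Qed.

Lemma push_filter_rcons r :
  swap_eq (push r x) (rcons r x) -> {in filter P r, forall y, y = x}.
Proof.
rewrite /push; case hcx: (cancel_in x r) => [s|] h.
  have [m [q [hq _ hs]]] := cancel_inP hcx.
  by move: (swap_eq_size h); rewrite hs size_rcons hq !size_cat /=; lia.
by apply: cons_rcons_const; have := swap_eq_filter hP h; rewrite filter_rcons /= Px.
Qed.

Lemma push_filter_cancel r p m : r = p ++ linv x :: m -> all (ladj x) m ->
  swap_eq (push r x) (p ++ m) -> {in filter P r, forall y, y = linv x}.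
Proof.
move=> hpm hm; rewrite /push; case hcx: (cancel_in x r) => [s|] h; last first.
  by move: (swap_eq_size h); rewrite /= hpm !size_cat /=; lia.
have [m1 [q1 [hq hm1 hs]]] := cancel_inP hcx.
have e1 := swap_eq_filter hP h.
rewrite hs !filter_cat (filter_adj_nil hm) (filter_adj_nil hm1) cats0 /= in e1.
have e2 : filter P r = linv x :: filter P q1.
  by rewrite hq filter_cat (filter_adj_nil hm1) /= Plinvx.
have e3 : filter P r = rcons (filter P p) (linv x).
  by rewrite hpm filter_cat /= Plinvx (filter_adj_nil hm) cats1.
move=> y; rewrite e2 inE => /orP[/eqP -> //|hy].
by apply: (cons_rcons_const (l := filter P q1)) => //; rewrite -e2 e3 e1.
Qed.

Lemma push_filter_const r : reduced r -> swap_eq (push r x) (reduce (x :: rev r)) ->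
  exists c : letter, c.1 = x.1 /\ {in filter P r, forall y, y = c}.
Proof.
move=> hr h; case: (reduced_rcons x hr) => [hr2|[p [m [hpm hm]]]].
  exists x; split => //; apply: push_filter_rcons.
  by rewrite -rev_rcons reduce_rev_reduced in h.
exists (linv x); split => //; apply: (push_filter_cancel hpm hm).
have hpm_red : reduced (p ++ m) by apply: reduced_remove_adj hm _; rewrite -hpm.
rewrite -(reduce_rev_reduced hpm_red); apply: swap_eq_trans h (reduce_req _).
rewrite hpm !rev_cat rev_cons -cats1 -catA /=.
have hmx : req (x :: rev m) (rev m ++ [:: x]).
  apply: req_comm_letter => y; rewrite mem_rev /lcomm => /(allP hm).
  by rewrite /ladj => ->.
apply: req_trans (req_catr ([:: linv x] ++ rev p) hmx) _; rewrite -catA.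
exact: (req_catl (rev m) (req_catr (rev p) (req_lettV x))).
Qed.

End IndependentProjection.

(* The centraliser of a generator x lies in the subgroup generated by the star
   of x.1: take for P the letters on x.1 or on a vertex y.1 outside the star. *)
Lemma reduce_centralizer z x : req (z ++ [:: x]) (x :: z) -> {in reduce z, forall y, lcomm x y}.
Proof.
move=> hc y hy; apply/negPn/negP; rewrite /lcomm negb_or => /andP[hxy hneq].
pose P : pred letter := fun a => (a.1 == x.1) || (a.1 == y.1).
have hP : forall a b : letter, e a.1 b.1 -> ~~ (P a && P b).
  move=> a b hab; rewrite /P; apply/negP => /andP[/orP[] /eqP ha /orP[] /eqP hb];
  by move: hab hxy; rewrite ha hb ?eirr // esym => ->.
have h : swap_eq (push (reduce z) x) (reduce (x :: rev (reduce z))).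
  rewrite -reduce_rcons -cats1; apply: swap_eq_trans (reduce_req hc) (reduce_req _).
  exact: req_cons (req_sym (rev_reduce z)).
have Px : P x by rewrite /P eqxx.
have Plinvx : P (linv x) by rewrite /P eqxx.
have [c [hcx hc']] := push_filter_const hP Px Plinvx (reduced_reduce z) h.
have : y \in filter P (reduce z) by rewrite mem_filter hy /P eqxx orbT.
by move/hc' => hyc; move: hneq; rewrite hyc hcx eqxx.
Qed.

Definition central_vertex (t : T) := [forall t', (t' != t) ==> e t t'].

Lemma reduce_center z : (forall t, req (z ++ [:: (t, false)]) ((t, false) :: z)) ->
  {in reduce z, forall y, central_vertex y.1}.
Proof.
move=> hz y hy; apply/forallP => t; apply/implyP => ht.
by have := reduce_centralizer (hz t) hy; rewrite /lcomm /= (negbTE ht) orbF esym.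
Qed.

Local Open Scope ring_scope.

Definition lexp (t : T) (x : letter) : int :=
  if x.1 == t then (if x.2 then -1 else 1) else 0.

Fixpoint expsum (t : T) (w : word) : int :=
  if w is x :: w' then lexp t x + expsum t w' else 0.

Lemma expsum_cat t u v : expsum t (u ++ v) = expsum t u + expsum t v.
Proof. by elim: u => [|x u ih] /=; rewrite ?add0r // ih addrA. Qed.

Lemma lexp_linv t x : lexp t (linv x) = - lexp t x.
Proof. by case: x => a []; rewrite /lexp /linv /=; case: (a == t); rewrite ?oppr0 ?opprK. Qed.

Lemma expsum_req t u v : req u v -> expsum t u = expsum t v.
Proof.
elim=> [a b h|a|a b _ ih|a b c _ ih1 _ ih2] //; last by rewrite ih1.
case: h => [u0 w0 x|u0 w0 a0 b0 s0 t0 hab]; rewrite !expsum_cat /=.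
  by rewrite lexp_linv addr0 addrN add0r.
by rewrite !addr0 (addrC (lexp t (a0, s0))).
Qed.

Lemma expsum_winv t w : expsum t (winv w) = - expsum t w.
Proof.
elim: w => [|x w ih] /=; first by rewrite oppr0.
by rewrite winv_cons -cats1 expsum_cat ih /= lexp_linv addr0 opprD addrC.
Qed.

Lemma expsum_notin t w : {in w, forall y, y.1 != t} -> expsum t w = 0.
Proof.
elim: w => [|x w ih] //= h.
rewrite ih ?addr0; last by move=> y hy; apply: h; rewrite inE hy orbT.
by rewrite /lexp (negbTE (h x _)) // inE eqxx.
Qed.

Definition gen (v : T) : word := [:: (v, false)].

Definition genX (v : T) (k : int) : word :=
  match k with Posz n => nseq n (v, false) | Negz n => nseq n.+1 (v, true) end.

Lemma expsum_nseq t x n : expsum t (nseq n x) = lexp t x *+ n.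
Proof. by elim: n => [|n ih] //=; rewrite ih mulrS. Qed.

Lemma expsum_genX t v k : expsum t (genX v k) = if v == t then k else 0.
Proof.
case: k => n /=; rewrite expsum_nseq /lexp /=; case: (v == t); rewrite ?mul0rn //.
  by rewrite natz.
by rewrite mulNrn natz NegzE; lia.
Qed.

Lemma req_genX_cons v b k :
  req ((v, b) :: genX v k) (genX v (lexp v (v, b) + k)).
Proof.
rewrite /lexp eqxx; case: b k => [[[|n]|n]|[n|[|n]]] /=; rewrite ?add0n ?subn1 /=;
  try exact: req_refl.
- by have := req_catr (nseq n (v, false)) (req_Vlett (v, false)).
- exact: (req_lettV (v, false)).
- by have := req_catr (nseq n.+1 (v, true)) (req_lettV (v, false)).
Qed.

Lemma req_genX_expsum c v : {in c, forall y, y.1 = v} -> req c (genX v (expsum v c)).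
Proof.
elim: c => [|[a b] c ih] h /=; first exact: req_refl.
have ha : a = v by apply: (h (a, b)); rewrite inE eqxx.
have ih' : req c (genX v (expsum v c)) by apply: ih => y hy; apply: h; rewrite inE hy orbT.
by rewrite ha; apply: req_trans (req_cons _ ih') (req_genX_cons _ _ _).
Qed.

Lemma expsum_filter_eq s t c :
  expsum s (filter (fun y : letter => y.1 == t) c) = if t == s then expsum s c else 0.
Proof.
elim: c => [|x c ih] /=; first by case: (t == s).
case: (eqVneq x.1 t) => [hx|hx] /=; rewrite ih.
  by case: (eqVneq t s) => [<-|hts] //; rewrite /lexp hx (negbTE hts) add0r.
by case: (eqVneq t s) => [hts|hts] //; rewrite /lexp -hts (negbTE hx) add0r.
Qed.

Lemma expsum_filter_neq s t c :
  expsum s (filter (fun y : letter => y.1 != t) c) = if t == s then 0 else expsum s c.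
Proof.
elim: c => [|x c ih] /=; first by case: (t == s).
case: (eqVneq x.1 t) => [hx|hx] /=; rewrite ih.
  by case: (eqVneq t s) => [hts|hts] //; rewrite /lexp hx (negbTE hts) add0r.
by case: (eqVneq t s) => [hts|hts] //; rewrite /lexp -hts (negbTE hx) add0r.
Qed.

Lemma req_split_vertex t c : {in c, forall y, y.1 != t -> e y.1 t} ->
  req c (filter (fun y : letter => y.1 == t) c ++ filter (fun y : letter => y.1 != t) c).
Proof.
elim: c => [|x c ih] h /=; first exact: req_refl.
have ih' := ih (fun y hy => h y ltac:(by rewrite inE hy orbT)).
case: (eqVneq x.1 t) => [hx|hx] /=; first exact: req_cons.
apply: req_trans (req_cons x ih') _.
set F := filter _ c; set G := filter _ c.
have hxt : e x.1 t by apply: h; rewrite ?inE ?eqxx.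
have h1 : req (x :: F) (F ++ [:: x]).
  apply: req_comm_letter => y; rewrite mem_filter => /andP[/eqP hy _].
  by rewrite /lcomm hy hxt.
by have := req_catr G h1; rewrite -catA.
Qed.

Lemma req_split_central t c : {in c, forall y, central_vertex y.1} ->
  req c (filter (fun y : letter => y.1 == t) c ++ filter (fun y : letter => y.1 != t) c).
Proof.
move=> hc; apply: req_split_vertex => y hy hyt.
by have /forallP /(_ t) := hc y hy; rewrite eq_sym hyt.
Qed.

Lemma req_nil_central c : {in c, forall y, central_vertex y.1} ->
  (forall t, expsum t c = 0) -> req c [::].
Proof.
have [n] := ubnP (size c); elim: n c => // n ih [|x c] hs hc ha; first exact: req_refl.
set t := x.1; apply: req_trans (req_split_central t hc) _.
rewrite -[[::]]cats0; apply: req_cat.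
  have := @req_genX_expsum (filter (fun y : letter => y.1 == t) (x :: c)) t.
  rewrite expsum_filter_eq eqxx ha; apply.
  by move=> y; rewrite mem_filter => /andP[/eqP ? _].
have hxc : [seq y <- x :: c | y.1 != t] = [seq y <- c | y.1 != t] by rewrite /= eqxx.
rewrite hxc; apply: ih.
- by rewrite size_filter (leq_ltn_trans (count_size _ _)).
- by move=> y; rewrite mem_filter => /andP[_ hy]; apply: hc; rewrite inE hy orbT.
- by move=> s; have := expsum_filter_neq s t (x :: c); rewrite hxc ha; case: (t == s).
Qed.

Definition lsubst (h : letter -> word) (w : word) : word := flatten (map h w).

Lemma lsubst_cat h u v : lsubst h (u ++ v) = lsubst h u ++ lsubst h v.
Proof. by rewrite /lsubst map_cat flatten_cat. Qed.
Lemma lsubst_cons h x w : lsubst h (x :: w) = h x ++ lsubst h w. Proof. by []. Qed.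
Lemma lsubst1 h x : lsubst h [:: x] = h x. Proof. by rewrite lsubst_cons cats0. Qed.
Lemma lsubst2 h x y : lsubst h [:: x; y] = h x ++ h y. Proof. by rewrite /lsubst /= cats0. Qed.

Definition lsubst_hom (h : letter -> word) :=
  (forall x, req (h x ++ h (linv x)) [::]) /\
  (forall a b s t, e a b -> req (h (a, s) ++ h (b, t)) (h (b, t) ++ h (a, s))).

Lemma lsubst_endo h : lsubst_hom h -> raag_endo e (lsubst h).
Proof.
case=> h1 h2; split=> [u v|u v]; last by rewrite /wmul lsubst_cat; exact: req_refl.
elim=> [a b st|a|a b _ ih|a b c _ ih1 _ ih2].
- case: st => [u0 w0 x|u0 w0 a0 b0 s0 t0 hab]; rewrite !lsubst_cat !lsubst2.
    exact: req_ctx _ _ (h1 x).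
  exact: req_ctx _ _ (h2 _ _ _ _ hab).
- exact: req_refl.
- exact: req_sym.
- exact: req_trans ih1 ih2.
Qed.

Lemma lsubstK h h' : (forall x, req (lsubst h' (h x)) [:: x]) ->
  forall w, req (lsubst h' (lsubst h w)) w.
Proof.
move=> hh; elim=> [|x w ih]; first exact: req_refl.
by rewrite lsubst_cons lsubst_cat; exact: (req_cat (hh x) ih).
Qed.

Lemma lsubst_aut h h' : lsubst_hom h -> lsubst_hom h' ->
  (forall x, req (lsubst h' (h x)) [:: x]) -> (forall x, req (lsubst h (h' x)) [:: x]) ->
  raag_aut e (lsubst h).
Proof.
move=> c1 c2 i1 i2; split; first exact: lsubst_endo.
by exists (lsubst h'); split; [exact: lsubst_endo | split; apply: lsubstK].
Qed.

Definition inv_at (t : T) (y : letter) : letter := if y.1 == t then linv y else y.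

Definition inversion (t : T) := lsubst (fun y => [:: inv_at t y]).

Lemma inv_at_fst t x : (inv_at t x).1 = x.1.
Proof. by rewrite /inv_at; case: ifP. Qed.
Lemma inv_atK t : involutive (inv_at t).
Proof. by move=> x; rewrite {1}/inv_at inv_at_fst /inv_at; case: (x.1 == t); rewrite ?linvK. Qed.

Lemma inversion_aut t : raag_aut e (inversion t).
Proof.
have hom : lsubst_hom (fun y => [:: inv_at t y]).
  split=> [x|a b s u hab] /=.
    have -> : inv_at t (linv x) = linv (inv_at t x) by rewrite /inv_at /=; case: ifP.
    exact: req_lettV.
  by apply: req_swap; rewrite /lcomm !inv_at_fst /= hab.
by apply: (lsubst_aut hom hom) => x; rewrite lsubst1 inv_atK; exact: req_refl.
Qed.

Lemma expsum_inversion t w : expsum t (inversion t w) = - expsum t w.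
Proof.
elim: w => [|x w ih]; first by rewrite /= oppr0.
rewrite /inversion lsubst_cons -/(inversion t w) /= ih opprD; congr (_ + _).
rewrite /inv_at; case: (eqVneq x.1 t) => [hx|hx]; first by rewrite lexp_linv.
by rewrite /lexp (negbTE hx) oppr0.
Qed.

Lemma inversion_gen t v : t != v -> inversion t (gen v) = gen v.
Proof. by move=> h; rewrite /inversion /gen lsubst1 /inv_at /= eq_sym (negbTE h). Qed.

(* on letters, the transvection a |-> a b, or a |-> a b^-1 when s is true *)
Definition transv_at (a b : T) (s : bool) (y : letter) : word :=
  if y.1 == a then (if y.2 then [:: (b, ~~ s); y] else [:: y; (b, s)]) else [:: y].

Lemma lcomm_central b z (s : bool) : central_vertex b -> lcomm (b, s) z && lcomm z (b, s).
Proof.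
move=> /forallP /(_ z.1) hb; rewrite /lcomm /=.
case: (eqVneq z.1 b) => [->|hzb]; first by rewrite ?eqxx ?orbT.
have h : e b z.1 by move: hb; rewrite hzb.
by rewrite h esym h.
Qed.

Lemma transv_at_mem a b s y z :
  z \in transv_at a b s y -> z = y \/ exists s', z = (b, s').
Proof.
rewrite /transv_at; case: ifP => _; last by rewrite inE => /eqP ->; left.
case: y.2; rewrite !inE => /orP[/eqP ->|/eqP ->]; by [left | right; eexists].
Qed.

Lemma transv_at_hom a b s : central_vertex b -> lsubst_hom (transv_at a b s).
Proof.
move=> hb; split.
  case=> c d; rewrite /transv_at /=; case: (c == a); last exact: req_lettV.
  case: d => /=.
    apply: req_trans (req_ctx [:: (b, ~~ s)] [:: (b, s)] (req_lettV (c, true))) _ => /=.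
    by have := req_lettV (b, ~~ s); rewrite /linv /= negbK.
  apply: req_trans (req_ctx [:: (c, false)] [:: (c, true)] (req_lettV (b, s))) _.
  exact: (req_lettV (c, false)).
move=> c d s1 t1 hcd; apply: req_comm => x y hx hy.
have [->|[s' ->]] := transv_at_mem hx; last by case/andP: (lcomm_central y s' hb).
have [->|[s'' ->]] := transv_at_mem hy; last by case/andP: (lcomm_central (c, s1) s'' hb).
by rewrite /lcomm /= hcd.
Qed.

Lemma transv_atK a b s y : a != b ->
  req (lsubst (transv_at a b (~~ s)) (transv_at a b s y)) [:: y].
Proof.
move=> hab; case: y => c d; rewrite /transv_at /=.
have hba : (b == a) = false by apply/negbTE; rewrite eq_sym.
case: (eqVneq c a) => [->|hca] /=; last first.
  by rewrite lsubst1 /transv_at /= (negbTE hca); exact: req_refl.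
case: d; rewrite lsubst2 /transv_at /= eqxx hba /=.
  exact: (req_catr [:: (a, true)] (req_lettV (b, ~~ s))).
by have := req_catl [:: (a, false)] (req_lettV (b, ~~ s)); rewrite /linv /= negbK.
Qed.

Definition transvection a b := lsubst (transv_at a b false).

Lemma transvection_aut a b : a != b -> central_vertex b -> raag_aut e (transvection a b).
Proof.
move=> hab hb; apply: (lsubst_aut (h' := transv_at a b true)); try exact: transv_at_hom.
- by move=> x; exact: (transv_atK false x hab).
- by move=> x; have := transv_atK true x hab.
Qed.

Lemma expsum_transvection a b w :
  a != b -> expsum b (transvection a b w) = expsum b w + expsum a w.
Proof.
move=> hab; elim: w => [|[c d] w ih] /=; first by rewrite addr0.
rewrite /transvection lsubst_cons expsum_cat -/(transvection a b w) ih.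
rewrite /transv_at /=; case: (eqVneq c a) => [->|hca] /=.
  by case: d; rewrite /= /lexp /= ?eqxx (negbTE hab) /=; lia.
by rewrite /lexp /= (negbTE hca); lia.
Qed.

Lemma transvection_gen a b : transvection a b (gen a) = [:: (a, false); (b, false)].
Proof. by rewrite /transvection /gen lsubst1 /transv_at /= eqxx. Qed.

Definition inner (g w : word) : word := g ++ w ++ winv g.

Lemma innerK g w : req (inner (winv g) (inner g w)) w.
Proof.
rewrite /inner winvK -!catA.
have h1 := req_ctx [::] (w ++ winv g ++ g) (req_Vcat g).
rewrite /= -catA in h1; apply: req_trans h1 _.
by have := req_catl w (req_Vcat g); rewrite cats0.
Qed.

Lemma inner_endo g : raag_endo e (inner g).
Proof.
split=> [u v h|u v]; first exact: req_ctx.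
rewrite /wmul /inner; apply: req_sym.
by have := req_ctx (g ++ u) (v ++ winv g) (req_Vcat g); rewrite -!catA.
Qed.

Lemma inner_aut g : raag_aut e (inner g).
Proof.
split; first exact: inner_endo.
exists (inner (winv g)); split; first exact: inner_endo.
by split=> w; [exact: innerK | have := innerK (winv g) w; rewrite winvK].
Qed.

Lemma endo_nil f : raag_endo e f -> req (f [::]) [::].
Proof. by case=> _ hh; apply: req_sym; apply: (@req_catrI (f [::])); exact: (hh [::] [::]). Qed.

Lemma endo_winv f w : raag_endo e f -> req (f (winv w)) (winv (f w)).
Proof.
move=> hf; apply: (@req_catlI (f w)).
apply: req_trans (req_sym (hf.2 w (winv w))) _.
apply: req_trans (hf.1 _ _ (req_catV w)) _.
exact: req_trans (endo_nil hf) (req_sym (req_catV _)).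
Qed.

Lemma endo_eq_gen f g : raag_endo e f -> raag_endo e g ->
  (forall v, req (f (gen v)) (g (gen v))) -> aut_eq e f g.
Proof.
move=> hf hg hv.
have hl : forall x, req (f [:: x]) (g [:: x]).
  case=> v [] ; last exact: hv.
  have -> : [:: (v, true)] = winv (gen v) by [].
  apply: req_trans (endo_winv _ hf) _.
  exact: req_trans (req_winv (hv v)) (req_sym (endo_winv _ hg)).
elim=> [|x w ih]; first exact: req_trans (endo_nil hf) (req_sym (endo_nil hg)).
apply: req_trans (hf.2 [:: x] w) _; apply: req_trans (req_cat (hl x) ih) _.
exact: req_sym (hg.2 [:: x] w).
Qed.

Lemma expsum_endo_genX g t v m : raag_endo e g ->
  expsum t (g (genX v m)) = m * expsum t (g (gen v)).
Proof.
move=> hg.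
have hn : forall x n, expsum t (g (nseq n x)) = n%:Z * expsum t (g [:: x]).
  move=> x; elim=> [|n ih] /=; first by rewrite (expsum_req t (endo_nil hg)) mul0r.
  by rewrite (expsum_req t (hg.2 [:: x] _)) expsum_cat ih intS; ring.
case: m => n; rewrite /genX hn //.
have -> : [:: (v, true)] = winv (gen v) by [].
by rewrite (expsum_req t (endo_winv _ hg)) expsum_winv NegzE; ring.
Qed.

Section CentralAutomorphism.
Variable f : word -> word.
Hypothesis hf : aut_central e f.

Lemma central_aut_invf_central h y : req (winv h ++ f h ++ y) (y ++ winv h ++ f h).
Proof.
case: hf => [[hfe [g [hge [hgf hfg]]]] hc].
have k : req (f (inner h (g y))) (inner h (f (g y))) := hc _ (inner_aut h) (g y).
have K : req (f h ++ y ++ winv (f h)) (h ++ y ++ winv h).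
  have l1 : req (f (inner h (g y))) (f h ++ y ++ winv (f h)).
    apply: req_trans (hfe.2 h (g y ++ winv h)) _.
    apply: req_catl; apply: req_trans (hfe.2 (g y) (winv h)) _.
    exact: req_cat (hfg y) (endo_winv _ hfe).
  have l2 : req (inner h (f (g y))) (h ++ y ++ winv h) := req_ctx h (winv h) (hfg y).
  exact: req_trans (req_sym l1) (req_trans k l2).
have L : req (winv h ++ f h ++ y) (winv h ++ (f h ++ y ++ winv (f h)) ++ f h).
  rewrite -!catA; have := req_catl (winv h ++ f h ++ y) (req_Vcat (f h)).
  by rewrite cats0 -!catA => /req_sym.
have R : req (winv h ++ (h ++ y ++ winv h) ++ f h) (y ++ winv h ++ f h).
  by rewrite -!catA catA; have := req_catr (y ++ winv h ++ f h) (req_Vcat h).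
exact: req_trans L (req_trans (req_ctx (winv h) (f h) K) R).
Qed.

Lemma central_aut_gen_tail v :
  exists c, {in c, forall y, central_vertex y.1} /\ req (f (gen v)) (gen v ++ c).
Proof.
set z := winv (gen v) ++ f (gen v).
have hz : forall t, req (z ++ [:: (t, false)]) ((t, false) :: z).
  by move=> t; have := central_aut_invf_central (gen v) (gen t); rewrite /z -!catA.
exists (rev (reduce z)); split; first by move=> y; rewrite mem_rev; exact: reduce_center hz y.
apply: req_trans (_ : req _ (gen v ++ z)) (req_catl (gen v) (req_sym (rev_reduce z))).
by rewrite /z catA; exact: req_sym (req_catr (f (gen v)) (req_catV (gen v))).
Qed.

(* commuting with the inversion of t *)
Lemma central_aut_tail_expsum v t c :
  t != v -> req (f (gen v)) (gen v ++ c) -> expsum t c = 0.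
Proof.
move=> htv hfv; case: hf => [[hfe _] hc].
have k := hc _ (inversion_aut t) (gen v); rewrite /= inversion_gen // in k.
have hi := (inversion_aut t).1.1 _ _ hfv.
rewrite /inversion lsubst_cat -/(inversion t (gen v)) -/(inversion t c) inversion_gen // in hi.
have := expsum_req t (req_trans (req_sym hfv) (req_trans k hi)).
by rewrite !expsum_cat expsum_inversion => h; lia.
Qed.

Lemma central_aut_genX v :
  exists m, req (f (gen v)) (genX v m) /\ (~~ central_vertex v -> m = 1).
Proof.
have [c [hc hfv]] := central_aut_gen_tail v.
have h0 t : t != v -> expsum t c = 0 := fun ht => central_aut_tail_expsum ht hfv.
have hs := req_split_central v hc.
set F := filter _ c in hs; set G := filter _ c in hs.
have hG : req G [::].
  apply: req_nil_central => [y|s]; first by rewrite mem_filter => /andP[_ /hc].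
  by rewrite expsum_filter_neq; case: (eqVneq v s) => [//|hvs]; apply: h0; rewrite eq_sym.
have hF : req F (genX v (expsum v F)).
  by apply: req_genX_expsum => y; rewrite mem_filter => /andP[/eqP ? _].
exists (1 + expsum v F); split.
  apply: req_trans hfv _; apply: req_trans (req_catl (gen v) hs) _.
  apply: req_trans (req_catl (gen v) (req_cat hF hG)) _.
  by rewrite cats0; have := req_genX_cons v false (expsum v F); rewrite /lexp eqxx.
move=> hv; have -> : expsum v F = 0; last by [].
rewrite expsum_filter_eq eqxx; apply: expsum_notin => y hy; apply/eqP => hyv.
by move: (hc y hy); rewrite hyv; apply/negP.
Qed.

(* f^-1 maps v^m back to v, so m divides 1 *)
Lemma central_aut_genX_unit v m : req (f (gen v)) (genX v m) -> m = 1 \/ m = -1.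
Proof.
move=> hfv; case: hf => [[hfe [g [hge [hgf hfg]]]] _].
have k : req (g (genX v m)) (gen v) := req_trans (hge.1 _ _ (req_sym hfv)) (hgf (gen v)).
have := expsum_req v k; rewrite expsum_endo_genX // /= /lexp /= eqxx addr0 => h.
have : m \is a intUnitRing.unitz.
  by apply: (@intUnitRing.unitzPl _ (expsum v (g (gen v)))); rewrite mulrC.
by rewrite qualifE => /orP[/eqP ->|/eqP ->]; [left|right].
Qed.

(* commuting with the transvection a |-> a b *)
Lemma central_aut_genX_eq a b ma mb : central_vertex b -> a != b ->
  req (f (gen a)) (genX a ma) -> req (f (gen b)) (genX b mb) -> ma = mb.
Proof.
move=> hb hab ha hbb; case: hf => [[hfe _] hc].
have k := hc _ (transvection_aut hab hb) (gen a); rewrite /= transvection_gen in k.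
have l1 : req (f [:: (a, false); (b, false)]) (genX a ma ++ genX b mb).
  by apply: req_trans (hfe.2 (gen a) (gen b)) _; exact: req_cat.
have l2 := (transvection_aut hab hb).1.1 _ _ ha.
have := expsum_req b (req_trans (req_sym l1) (req_trans k l2)).
by rewrite expsum_cat expsum_transvection // !expsum_genX !eqxx (negbTE hab); lia.
Qed.

Lemma central_aut_id : (exists v0, ~~ central_vertex v0) -> aut_eq e f id.
Proof.
move=> [v0 hv0]; apply: (endo_eq_gen hf.1.1 (conj (fun _ _ => id) (fun _ _ => req_refl _))).
move=> v /=; have [m [hm hm1]] := central_aut_genX v.
have [hv|hv] := boolP (central_vertex v); last by move: hm; rewrite (hm1 hv).
have [m0 [hm0 hm01]] := central_aut_genX v0.
have hne : v0 != v by apply: contraNneq hv0 => ->.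
have hm0m := central_aut_genX_eq hv hne hm0 hm.
by move: hm; rewrite -hm0m (hm01 hv0).
Qed.

Lemma central_aut_sign : (forall v, central_vertex v) ->
  exists eps : int, (eps = 1 \/ eps = -1) /\ forall v, req (f (gen v)) (genX v eps).
Proof.
move=> hall; have [v0 _|hn] := pickP (fun v : T => true); last first.
  by exists 1; split; [left | move=> v; have := hn v].
have [m0 [hm0 _]] := central_aut_genX v0.
exists m0; split; first exact: central_aut_genX_unit hm0.
move=> v; have [m [hm _]] := central_aut_genX v.
case: (eqVneq v0 v) => [<- //|hne].
by have := central_aut_genX_eq (hall v) hne hm0 hm => ->.
Qed.

End CentralAutomorphism.

Lemma expsum_flatten_genX (z : 'I_#|T| -> int) (s : seq 'I_#|T|) j : uniq s ->
  expsum (enum_val j) (flatten [seq genX (enum_val i) (z i) | i <- s]) =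
  if j \in s then z j else 0.
Proof.
elim: s => [|i s ih] //= /andP[his hs].
rewrite expsum_cat expsum_genX ih // inE (can_eq enum_valK) eq_sym.
by case: (eqVneq j i) => [->|hji] /=; [rewrite (negbTE his) addr0 | rewrite add0r].
Qed.

Lemma raag_free_abelian_complete : (forall v, central_vertex v) -> raag_free_abelian e.
Proof.
move=> hall; exists #|T|, (fun w => [ffun i => expsum (enum_val i) w]).
split; [|split; [|split]].
- by move=> u v h; apply/ffunP => i; rewrite !ffunE; exact: expsum_req.
- by move=> u v; apply/ffunP => i; rewrite !ffunE /wmul expsum_cat.
- move=> u v /ffunP h; apply: (@req_catrI (winv v)); apply: req_trans _ (req_sym (req_catV v)).
  apply: req_nil_central => [y _|t]; first exact: hall.
  rewrite expsum_cat expsum_winv.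
  by have := h (enum_rank t); rewrite !ffunE enum_rankK => ->; rewrite subrr.
- move=> z; exists (flatten [seq genX (enum_val i) (z i) | i <- enum 'I_#|T|]).
  by apply/ffunP => j; rewrite ffunE expsum_flatten_genX ?enum_uniq // mem_enum.
Qed.

Lemma noncentral_vertex_or_complete :
  (exists v, ~~ central_vertex v) \/ (forall v, central_vertex v).
Proof.
have [/existsP|] := boolP [exists v, ~~ central_vertex v]; first by left.
by rewrite negb_exists => /forallP /(_ _) /negbNE; right.
Qed.

Lemma endo_eq_genX f g (eps : int) : raag_endo e f -> raag_endo e g ->
  (forall v, req (f (gen v)) (genX v eps)) -> (forall v, req (g (gen v)) (genX v eps)) ->
  aut_eq e f g.
Proof.
move=> hf hg kf kg; apply: (endo_eq_gen hf hg) => v.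
exact: req_trans (kf v) (req_sym (kg v)).
Qed.

Lemma central_aut_at_most_two f1 f2 f3 :
  aut_central e f1 -> aut_central e f2 -> aut_central e f3 ->
  aut_eq e f1 f2 \/ aut_eq e f1 f3 \/ aut_eq e f2 f3.
Proof.
move=> h1 h2 h3; case: noncentral_vertex_or_complete => [hv|hall].
  left => w; apply: req_trans (central_aut_id h1 hv w) _.
  exact: req_sym (central_aut_id h2 hv w).
have [e1 [[] -> k1]] := central_aut_sign h1 hall;
have [e2 [[] -> k2]] := central_aut_sign h2 hall;
have [e3 [[] -> k3]] := central_aut_sign h3 hall;
by [left; exact: endo_eq_genX h1.1.1 h2.1.1 k1 k2
   | right; left; exact: endo_eq_genX h1.1.1 h3.1.1 k1 k3
   | right; right; exact: endo_eq_genX h2.1.1 h3.1.1 k2 k3].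
Qed.

Lemma central_aut_trivial f :
  ~ raag_free_abelian e -> aut_central e f -> aut_eq e f id.
Proof.
move=> hnf hf; case: noncentral_vertex_or_complete => [|hall].
  exact: central_aut_id.
by case: hnf; exact: raag_free_abelian_complete.
Qed.

End RAAG.

Theorem mainTheorem8 (T : finType) (e : rel T) (hG : simplicial_graph e) :
  (forall f1 f2 f3 : word T -> word T,
      aut_central e f1 -> aut_central e f2 -> aut_central e f3 ->
      aut_eq e f1 f2 \/ aut_eq e f1 f3 \/ aut_eq e f2 f3) /\
  (~ raag_free_abelian e ->
      forall f : word T -> word T, aut_central e f -> aut_eq e f id).
Proof.
case: hG => esym eirr; split.
- exact: central_aut_at_most_two.
- by move=> hnf f; exact: central_aut_trivial.
Qed.
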